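(* Let $R$ be an associative unital division ring over a field $F$ of characteristic $0$ with a derivation $'$ (vanishing on $F$), let $\lambda\in F$, and let $\theta_n\in R$ be invertible for all $n\in\mathbb{Z}$. Define $$\mathcal{L}_n=\begin{pmatrix}\lambda-\theta_n'\theta_n^{-1} & -\theta_n\\ \theta_n^{-1} & 0\end{pmatrix},\qquad \mathcal{M}_n=\begin{pmatrix}0 & -\theta_n\\ \theta_{n-1}^{-1} & -\lambda\end{pmatrix}.$$ If $(\theta_n'\theta_n^{-1})'=\theta_{n+1}\theta_n^{-1}-\theta_n\theta_{n-1}^{-1}$ for all $n$, then $\mathcal{L}_n'=\mathcal{M}_{n+1}\mathcal{L}_n-\mathcal{L}_n\mathcal{M}_n$ for all $n$, where $'$ acts entrywise. *)

From HB Require Import structures.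
From mathcomp Require Import all_boot all_order all_algebra.
Set Implicit Arguments. Unset Strict Implicit. Unset Printing Implicit Defensive.
Import Order.TTheory GRing.Theory Num.Theory.
Local Open Scope ring_scope.

Definition mx2 (R : pzRingType) (a b c d : R) : 'M[R]_2 :=
  \matrix_(i < 2, j < 2)
    if i == 0 :> nat then (if j == 0 :> nat then a else b)
    else (if j == 0 :> nat then c else d).

Definition is_derivation (F : fieldType) (R : unitAlgType F) (D : R -> R) :=
  [/\ forall x y, D (x + y) = D x + D y,
      forall x y, D (x * y) = D x * y + x * D y
    & forall k : F, D (k%:A) = 0].

Definition Lmx (F : fieldType) (R : unitAlgType F) (D : R -> R)
  (lam : F) (theta : int -> R) (n : int) : 'M[R]_2 :=
  mx2 (lam%:A - D (theta n) * (theta n)^-1) (- theta n) ((theta n)^-1) 0.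

Definition Mmx (F : fieldType) (R : unitAlgType F)
  (lam : F) (theta : int -> R) (n : int) : 'M[R]_2 :=
  mx2 0 (- theta n) ((theta (n - 1))^-1) (- lam%:A).

From HB Require Import structures.
From mathcomp Require Import all_boot all_order all_algebra.
Import Order.TTheory GRing.Theory Num.Theory.
Local Open Scope ring_scope.

(* The top-left entry of the zero
   curvature equation is exactly the hypothesis on (theta_n' theta_n^-1)', the
   bottom-left one is the formula (t^-1)' = - t^-1 t' t^-1, and the top-right
   one holds because lambda%:A is central. *)

Section Derivation.

Variables (R : unitRingType) (D : R -> R).
Hypothesis DD : forall x y, D (x + y) = D x + D y.
Hypothesis DM : forall x y, D (x * y) = D x * y + x * D y.

Lemma derivation0 : D 0 = 0.
Proof. by apply: (addIr (D 0)); rewrite -DD !add0r. Qed.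

Lemma derivationN x : D (- x) = - D x.
Proof. by apply/eqP; rewrite -addr_eq0 -DD addNr derivation0. Qed.

Lemma derivationB x y : D (x - y) = D x - D y.
Proof. by rewrite DD derivationN. Qed.

Lemma derivation1 : D 1 = 0.
Proof. by apply: (addIr (D 1)); rewrite -{3}[1]mul1r DM mul1r mulr1 add0r. Qed.

Lemma derivationV x : x \is a GRing.unit -> D x^-1 = - (x^-1 * D x * x^-1).
Proof.
move=> Ux; apply: (mulrI Ux); rewrite mulrN !mulrA divrr // mul1r.
by apply/eqP; rewrite -addr_eq0 addrC -derivation1 -(divrr Ux) DM.
Qed.

End Derivation.

Section Mx2.

Variable R : pzRingType.

Lemma map_mx2 (S : pzRingType) (f : R -> S) (a b c d : R) :
  map_mx f (mx2 a b c d) = mx2 (f a) (f b) (f c) (f d).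
Proof. by apply/matrixP => i j; rewrite !mxE; case: ifP; case: ifP. Qed.

Lemma mul_mx2 (a b c d a' b' c' d' : R) :
  mx2 a b c d *m mx2 a' b' c' d'
  = mx2 (a * a' + b * c') (a * b' + b * d') (c * a' + d * c') (c * b' + d * d').
Proof.
apply/matrixP => i j; rewrite !mxE !big_ord_recr big_ord0 /= !mxE.
by case: i => [[|[|//]] ?]; case: j => [[|[|//]] ?]; rewrite add0r.
Qed.

Lemma mx2B (a b c d a' b' c' d' : R) :
  mx2 a b c d - mx2 a' b' c' d' = mx2 (a - a') (b - b') (c - c') (d - d').
Proof. by apply/matrixP => i j; rewrite !mxE; case: ifP; case: ifP. Qed.

End Mx2.

Theorem proposition4p8 (F : fieldType) (R : unitAlgType F) (D : R -> R)
  (lam : F) (theta : int -> R) :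
  [pchar F] =i pred0 ->
  (forall x : R, x != 0 -> x \is a GRing.unit) ->
  is_derivation D ->
  (forall n, theta n \is a GRing.unit) ->
  (forall n : int, D (D (theta n) * (theta n)^-1)
     = theta (n + 1) * (theta n)^-1 - theta n * (theta (n - 1))^-1) ->
  forall n : int,
    map_mx D (Lmx D lam theta n)
    = Mmx lam theta (n + 1) *m Lmx D lam theta n - Lmx D lam theta n *m Mmx lam theta n.
Proof.
move=> _ _ [DD DM DA] Utheta Htheta n.
rewrite /Lmx /Mmx map_mx2 !mul_mx2 mx2B addrK.
have Ut := Utheta n; set t := theta n.
have lam_central (x : R) : lam%:A * x = x * lam%:A by rewrite mulr_algl mulr_algr.
congr mx2; rewrite !(mulr0, mul0r, addr0, add0r, subr0, sub0r).
- by rewrite derivationB // DA Htheta sub0r opprB !mulNr opprK addrC.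
- rewrite derivationN // mulrNN mulrN mulrBl divrK // lam_central.
  by rewrite opprD opprK addrAC subrr add0r.
- rewrite derivationV // mulrBr mulNr lam_central.
  by rewrite addrAC subrr add0r mulrA.
- by rewrite derivation0 // subrr.
Qed.
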